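(* Let $M\ge 1$ be an integer and let $\rho_1>\rho_2>\dots>\rho_M>0$. Let $(a,b)\subset\mathbb R$ be a bounded interval. For $\varepsilon>0$ and $u\colon\varepsilon\mathbb Z\to\mathbb R$ with $u(x)=0$ for all $x\in\varepsilon\mathbb Z\setminus(a,b)$, write $u_k=u(\varepsilon k)$ and define $$ F_\varepsilon(u)=\sum_{k\in\mathbb Z}\varepsilon\,\biggl|\frac1\varepsilon\Bigl(\sum_{j=1}^M (u_{k+j}-u_k)\rho_j-\sum_{j=1}^M (u_{k-j+1}-u_k)\rho_j\Bigr)\biggr|^2 . $$ Then there exists a constant $\Lambda>0$, independent of $\varepsilon$ and $u$, such that $$ F_\varepsilon(u)\ \ge\ \Lambda\sum_{k\in\mathbb Z}\varepsilon\,\Bigl|\frac{u_{k+1}-u_k}{\varepsilon}\Bigr|^2 $$ for all such $u$ and all $0<\varepsilon<\frac{1}{2M}$.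
   Context: The quantity inside the absolute value equals the scaled discrete nonlocal gradient $\frac1\varepsilon\bigl(-\sum_{i=1}^M\rho_i u_{k+1-i}+\sum_{i=1}^M\rho_i u_{k+i}\bigr)$. Only finitely many terms of the sums are nonzero since $u$ vanishes outside $(a,b)$. *)

From HB Require Import structures.
From mathcomp Require Import all_boot all_order all_algebra.
From mathcomp Require Import all_classical all_reals.
Set Implicit Arguments. Unset Strict Implicit. Unset Printing Implicit Defensive.
Import Order.TTheory GRing.Theory Num.Theory.
Local Open Scope ring_scope.
Local Open Scope classical_set_scope.

Definition zsum (R : realType) (f : int -> R) : R := \sum_(k \in [set: int]) f k.

Definition Feps (R : realType) (M : nat) (rho : nat -> R) (eps : R)
  (u : int -> R) : R :=
  zsum (fun k : int =>
    eps * (eps^-1 * (\sum_(1 <= j < M.+1) (u (k + j%:Z) - u k) * rho j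
                    - \sum_(1 <= j < M.+1) (u (k - j%:Z + 1) - u k) * rho j)) ^+ 2).

Definition Deps (R : realType) (eps : R) (u : int -> R) : R :=
  zsum (fun k : int => eps * ((u (k + 1) - u k) / eps) ^+ 2).

From HB Require Import structures.
From mathcomp Require Import all_boot all_order all_algebra.
From mathcomp Require Import all_classical all_reals.
From mathcomp Require Import zify ring lra.
Import Order.TTheory GRing.Theory Num.Theory.
Local Open Scope ring_scope.
Local Open Scope classical_set_scope.
Set Implicit Arguments. Unset Strict Implicit.

(* Write d_k = u_{k+1} - u_k and S_k for the nonlocal gradient, so that
   F = eps^-1 sum S_k^2 and D = eps^-1 sum d_k^2.  In terms of the
   autocorrelation P(m) = sum u_k u_{k+m}, the lag energies
   Q(m) = sum (u_{k+m} - u_k)^2 = 2 P(0) - 2 P(m) satisfy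
   sum_k d_k (u_{k+m} - u_{k-m+1}) = Q(m) - Q(m-1), hence
   sum_k d_k S_k = sum_j rho_j (Q(j) - Q(j-1)).  Summation by parts against the
   decreasing weights bounds this below by c Q(1) = c sum d_k^2, with
   c = rho_1 - rho_2 (c = rho_1 if M = 1).  Finally
   2 c d_k S_k <= S_k^2 + c^2 d_k^2 yields c^2 sum d_k^2 <= sum S_k^2,
   i.e. Lambda = c^2. *)

Section FinitelySupportedSums.
Variable R : realType.
Implicit Types (f g : int -> R) (D : set int).

Definition finsupp f : Prop := finite_set [set k | f k != 0].

Lemma finsupp_sub f g : (forall k, g k = 0 -> f k = 0) -> finsupp g -> finsupp f.
Proof.
move=> gf fing; apply: (sub_finite_set _ fing) => k /=.
by apply: contra_neq; apply: gf.
Qed.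

Lemma finsuppD f g : finsupp f -> finsupp g -> finsupp (fun k => f k + g k).
Proof.
move=> finf fing.
have : finite_set ([set k | f k != 0] `|` [set k | g k != 0]).
  by rewrite finite_setU.
apply: sub_finite_set => k /=.
by case: (eqVneq (f k) 0) => [->|]; [rewrite add0r; right|left].
Qed.

Lemma finsuppN f : finsupp f -> finsupp (fun k => - f k).
Proof. by apply: finsupp_sub => k ->; rewrite oppr0. Qed.

Lemma finsuppB f g : finsupp f -> finsupp g -> finsupp (fun k => f k - g k).
Proof. by move=> finf /finsuppN; apply: finsuppD. Qed.

Lemma finsuppMl f g : finsupp f -> finsupp (fun k => f k * g k).
Proof. by apply: finsupp_sub => k ->; rewrite mul0r. Qed.

Lemma finsuppMr f g : finsupp g -> finsupp (fun k => f k * g k).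
Proof. by apply: finsupp_sub => k ->; rewrite mulr0. Qed.

Lemma finsupp_shift f (m : int) : finsupp f -> finsupp (fun k => f (k + m)).
Proof. by move=> finf; apply: finite_preimage finf => x y _ _ /addIr. Qed.

Lemma finsupp_sum (I : Type) (r : seq I) (F : I -> int -> R) :
  (forall i, finsupp (F i)) -> finsupp (fun k => \sum_(i <- r) F i k).
Proof.
move=> finF; elim: r => [|i r IH].
  by apply: (sub_finite_set _ (@finite_set0 int)) => k /=; rewrite big_nil eqxx.
by under eq_fun do rewrite big_cons; apply: finsuppD.
Qed.

Lemma zsum_widen f D : [set k | f k != 0] `<=` D -> zsum f = \sum_(k \in D) f k.
Proof.
move=> suppD; rewrite /zsum -(fsbig_widen D [set: int] f) // => k [_ /= Dk].
by apply: contra_notP Dk => /eqP; apply: suppD.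
Qed.

Lemma zsumD f g : finsupp f -> finsupp g ->
  zsum (fun k => f k + g k) = zsum f + zsum g.
Proof.
move=> finf fing; pose D := [set k | f k != 0] `|` [set k | g k != 0].
have finD : finite_set D by rewrite finite_setU.
rewrite !(@zsum_widen _ D) ?fsbig_split // => k /=.
- by move=> ?; right.
- by move=> ?; left.
- by case: (eqVneq (f k) 0) => [->|]; [rewrite add0r; right|left].
Qed.

Lemma zsumZ (c : R) f : zsum (fun k => c * f k) = c * zsum f.
Proof. by rewrite /zsum mulr_fsumr. Qed.

Lemma zsumN f : zsum (fun k => - f k) = - zsum f.
Proof.
by rewrite -mulN1r -zsumZ; congr zsum; apply: funext => k; rewrite mulN1r.
Qed.

Lemma zsumB f g : finsupp f -> finsupp g ->
  zsum (fun k => f k - g k) = zsum f - zsum g.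
Proof. by move=> finf fing; rewrite zsumD ?zsumN //; apply: finsuppN. Qed.

Lemma zsum_shift f (m : int) : zsum (fun k => f (k + m)) = zsum f.
Proof.
rewrite /zsum (reindex_fsbigT (fun k => k + m) f) //.
by exists (fun k => k - m) => k; rewrite ?addrK ?subrK.
Qed.

Lemma zsum_sum (I : Type) (r : seq I) (F : I -> int -> R) :
  (forall i, finsupp (F i)) ->
  zsum (fun k => \sum_(i <- r) F i k) = \sum_(i <- r) zsum (F i).
Proof.
move=> finF; elim: r => [|i r IH].
  by rewrite big_nil /zsum fsbig1 // => k _; rewrite big_nil.
under eq_fun do rewrite big_cons.
by rewrite big_cons zsumD ?IH //; apply: finsupp_sum.
Qed.

Lemma zsum_ge0 f : (forall k, 0 <= f k) -> 0 <= zsum f.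
Proof. by move=> f_ge0; apply: fsumr_ge0. Qed.

Lemma ler_zsum f g : finsupp f -> finsupp g -> (forall k, f k <= g k) ->
  zsum f <= zsum g.
Proof.
move=> finf fing fg; rewrite -subr_ge0 -zsumB //.
by apply: zsum_ge0 => k; rewrite subr_ge0.
Qed.

Lemma zsum_sqr_ge_of_dot (c : R) (d s : int -> R) :
  0 <= c -> finsupp d -> finsupp s ->
  c * zsum (fun k => d k ^+ 2) <= zsum (fun k => d k * s k) ->
  c ^+ 2 * zsum (fun k => d k ^+ 2) <= zsum (fun k => s k ^+ 2).
Proof.
move=> c_ge0 find fins dot_ge.
have fin_ds : finsupp (fun k => d k * s k) by apply: finsuppMl.
have fin_dd : finsupp (fun k => d k ^+ 2).
  by apply: finsupp_sub find => k ->; rewrite expr0n.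
have : zsum (fun k => 2 * c * (d k * s k) - c ^+ 2 * d k ^+ 2) <=
       zsum (fun k => s k ^+ 2).
  apply: ler_zsum => [||k].
  - by apply: finsuppB; apply: finsuppMr.
  - by apply: finsupp_sub fins => k ->; rewrite expr0n.
  - by rewrite -subr_ge0 (_ : _ - _ = (s k - c * d k) ^+ 2) ?sqr_ge0 //; ring.
rewrite zsumB ?zsumZ; try by apply: finsuppMr.
have := ler_wpM2l c_ge0 dot_ge; nra.
Qed.

End FinitelySupportedSums.

Lemma finite_set_absz_lt (N : nat) : finite_set [set k : int | (`|k| < N)%N].
Proof.
have := finite_image (fun i : nat => i%:Z - N%:Z) (finite_II N.*2).
apply: sub_finite_set.
move=> k /= kN; exists (absz (k + N%:Z)); rewrite /=; lia.
Qed.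

Lemma finsupp_of_bounded (R : realType) (a b eps : R) (u : int -> R) : 0 < eps ->
  (forall k : int, ~ (a < eps * k%:~R < b) -> u k = 0) -> finsupp u.
Proof.
move=> eps_gt0 u_out; pose C := (`|a| + `|b|) / eps.
have C_ge0 : 0 <= C by rewrite divr_ge0 ?addr_ge0 // ltW.
apply: (sub_finite_set _ (finite_set_absz_lt (Num.Def.archi_bound C))) => k /= uk.
have /andP[ak kb] : a < eps * k%:~R < b.
  by case: (boolP (a < _ < b)) => // /negP /u_out uk0; rewrite uk0 eqxx in uk.
rewrite -(ltr_nat R); apply: le_lt_trans (archi_boundP C_ge0).
rewrite natr_absz intr_norm ler_pdivlMr // -[eps in X in X <= _]gtr0_norm //.
rewrite -normrM mulrC ler_norml.
have := ler_norm a; have := ler_norm (- a).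
have := ler_norm b; have := ler_norm (- b).
rewrite !normrN; lra.
Qed.

Section LagEnergy.
Variables (R : realType) (u : int -> R).
Hypothesis finu : finsupp u.

Definition autocorr (m : int) : R := zsum (fun k => u k * u (k + m)).

Definition lag_energy (m : int) : R := zsum (fun k => (u (k + m) - u k) ^+ 2).

Lemma finsupp_mul_shift (i j : int) : finsupp (fun k => u (k + i) * u (k + j)).
Proof. exact/finsuppMl/finsupp_shift. Qed.

Lemma autocorr_shift (i j : int) :
  zsum (fun k => u (k + i) * u (k + j)) = autocorr (j - i).
Proof.
rewrite /autocorr -(zsum_shift (fun k => u k * u (k + (j - i))) i).
by congr zsum; apply: funext => k; congr (_ * u _); ring.
Qed.

Lemma autocorrN (m : int) : autocorr (- m) = autocorr m.
Proof.
rewrite -[in RHS](opprK m) -sub0r -autocorr_shift /autocorr.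
by congr zsum; apply: funext => k; rewrite addr0 mulrC.
Qed.

Lemma lag_energyE (m : int) : lag_energy m = 2 * autocorr 0 - 2 * autocorr m.
Proof.
have -> : lag_energy m = zsum (fun k => u (k + m) * u (k + m) +
    u (k + 0) * u (k + 0) - 2 * (u (k + 0) * u (k + m))).
  by congr zsum; apply: funext => k; rewrite addr0; ring.
rewrite zsumB ?zsumD ?zsumZ ?autocorr_shift ?subrr ?subr0; first ring.
all: by auto using finsupp_mul_shift, finsuppD, finsuppMr.
Qed.

Lemma lag_energy_diff (m : int) :
  zsum (fun k => (u (k + 1) - u k) * (u (k + m) - u (k - m + 1))) =
  lag_energy m - lag_energy (m - 1).
Proof.
have -> : zsum (fun k => (u (k + 1) - u k) * (u (k + m) - u (k - m + 1))) =
  zsum (fun k => (u (k + 1) * u (k + m) + u (k + 0) * u (k + (1 - m))) -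
                 (u (k + 1) * u (k + (1 - m)) + u (k + 0) * u (k + m))).
  congr zsum; apply: funext => k; rewrite addr0 -addrA (addrC (- m)); ring.
rewrite zsumB ?zsumD ?autocorr_shift;
  try by auto using finsupp_mul_shift, finsuppD.
have -> : 1 - m - 0 = - (m - 1) by ring.
have -> : 1 - m - 1 = - m by ring.
by rewrite !autocorrN subr0 !lag_energyE; ring.
Qed.

Lemma lag_energy_ge0 (m : int) : 0 <= lag_energy m.
Proof. by apply: zsum_ge0 => k; apply: sqr_ge0. Qed.

Lemma lag_energy0 : lag_energy 0 = 0.
Proof. by rewrite lag_energyE subrr. Qed.

End LagEnergy.

Lemma sum_by_parts (R : comRingType) (r q : nat -> R) (n : nat) : q 0%N = 0 ->
  \sum_(1 <= j < n.+1) r j * (q j - q j.-1) =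
  \sum_(1 <= j < n.+1) (r j - r j.+1) * q j + r n.+1 * q n.
Proof.
move=> q0; elim: n => [|n IH]; first by rewrite !big_geq // q0 mulr0 addr0.
by rewrite !(big_nat_recr n.+1) //= IH; ring.
Qed.

Section TruncatedWeights.
Variables (R : realDomainType) (M : nat) (rho : nat -> R).
Hypothesis M_gt0 : (0 < M)%N.
Hypothesis rho_decr :
  forall i j : nat, (1 <= i)%N -> (i < j)%N -> (j <= M)%N -> rho j < rho i.
Hypothesis rho_M_gt0 : 0 < rho M.

(* Extending rho by 0 beyond M makes every coefficient rho_j - rho_{j+1},
   1 <= j <= M, produced by summation by parts positive. *)
Definition rho_trunc (j : nat) : R := if (j <= M)%N then rho j else 0.

Lemma rho_trunc_decr (j : nat) :
  (1 <= j <= M)%N -> 0 < rho_trunc j - rho_trunc j.+1.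
Proof.
case/andP=> j1 jM; rewrite /rho_trunc jM subr_gt0.
case: leqP => [Mj|jltM]; last exact: rho_decr.
by have -> : j = M by apply/eqP; rewrite eqn_leq jM Mj.
Qed.

Lemma weighted_increments_ge (q : nat -> R) : q 0%N = 0 -> (forall j, 0 <= q j) ->
  (rho_trunc 1 - rho_trunc 2) * q 1%N <=
  \sum_(1 <= j < M.+1) rho j * (q j - q j.-1).
Proof.
move=> q0 q_ge0.
rewrite (eq_big_nat _ _ (F2 := fun j => rho_trunc j * (q j - q j.-1)));
  last first.
  by move=> j /andP[_]; rewrite ltnS /rho_trunc => ->.
rewrite sum_by_parts // /rho_trunc ltnn mul0r addr0 big_ltn ?ltnS // lerDl.
rewrite big_nat sumr_ge0 // => j /andP[j1 jM].
by rewrite mulr_ge0 // ltW // rho_trunc_decr // (ltnW j1).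
Qed.
End TruncatedWeights.

Definition nl_grad (R : realType) (M : nat) (rho : nat -> R) (u : int -> R)
    (k : int) : R :=
  \sum_(1 <= j < M.+1) (u (k + j%:Z) - u k) * rho j
  - \sum_(1 <= j < M.+1) (u (k - j%:Z + 1) - u k) * rho j.

Section NonlocalGradient.
Variables (R : realType) (M : nat) (rho : nat -> R) (u : int -> R).
Hypothesis finu : finsupp u.

Lemma finsupp_nl_grad : finsupp (nl_grad M rho u).
Proof.
apply: finsuppB; apply: finsupp_sum => j; apply: finsuppMl; apply: finsuppB => //.
  exact: finsupp_shift.
have := finsupp_shift (1 - j%:Z) finu.
by apply: finsupp_sub => k; rewrite (addrC 1) addrA.
Qed.

Lemma zsum_diff_nl_grad :
  zsum (fun k => (u (k + 1) - u k) * nl_grad M rho u k) =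
  \sum_(1 <= j < M.+1) rho j * (lag_energy u j%:Z - lag_energy u j.-1%:Z).
Proof.
have -> : zsum (fun k => (u (k + 1) - u k) * nl_grad M rho u k) =
    zsum (fun k => \sum_(1 <= j < M.+1)
      rho j * ((u (k + 1) - u k) * (u (k + j%:Z) - u (k - j%:Z + 1)))).
  congr zsum; apply: funext => k.
  by rewrite /nl_grad -sumrB mulr_sumr; apply: eq_bigr => j _; ring.
rewrite zsum_sum => [|j]; last first.
  apply: finsuppMr; apply: finsuppMl.
  by apply: finsuppB => //; apply: finsupp_shift.
apply: eq_big_nat => j /andP[j1 _].
by rewrite zsumZ lag_energy_diff // predn_int.
Qed.
End NonlocalGradient.

Lemma Feps_nl_grad (R : realType) (M : nat) (rho : nat -> R) (eps : R)
    (u : int -> R) :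
  eps != 0 -> Feps M rho eps u = eps^-1 * zsum (fun k => nl_grad M rho u k ^+ 2).
Proof.
move=> eps_neq0; rewrite /Feps -zsumZ; congr zsum; apply: funext => k.
by rewrite /nl_grad; field.
Qed.

Lemma Deps_lag_energy (R : realType) (eps : R) (u : int -> R) :
  eps != 0 -> Deps eps u = eps^-1 * lag_energy u 1.
Proof.
by move=> eps_neq0; rewrite /Deps -zsumZ; congr zsum; apply: funext => k; field.
Qed.

Theorem theorem4p1 (R : realType) (M : nat) (rho : nat -> R) (a b : R) :
  (1 <= M)%N ->
  (forall i j : nat, (1 <= i)%N -> (i < j)%N -> (j <= M)%N -> rho j < rho i) ->
  0 < rho M ->
  a < b ->
  exists Lambda : R, 0 < Lambda /\
    forall (eps : R) (u : int -> R),
      0 < eps -> eps < (2 * M%:R)^-1 ->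
      (forall k : int, ~ (a < eps * k%:~R < b) -> u k = 0) ->
      Lambda * Deps eps u <= Feps M rho eps u.
Proof.
move=> M_gt0 rho_decr rho_M_gt0 _.
pose c := rho_trunc M rho 1 - rho_trunc M rho 2.
have c_gt0 : 0 < c by apply: rho_trunc_decr; rewrite ?leqnn.
exists (c ^+ 2); split=> [|eps u eps_gt0 _ u_out]; first exact: exprn_gt0.
have finu := finsupp_of_bounded eps_gt0 u_out.
have eps_neq0 : eps != 0 by rewrite gt_eqF.
rewrite Feps_nl_grad // Deps_lag_energy // mulrCA ler_pM2l ?invr_gt0 //.
apply: zsum_sqr_ge_of_dot (ltW c_gt0) _ (finsupp_nl_grad M rho finu) _.
  by apply: finsuppB => //; apply: finsupp_shift.
rewrite zsum_diff_nl_grad //.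
apply: (weighted_increments_ge M_gt0 rho_decr rho_M_gt0
  (q := fun j => lag_energy u j%:Z)).
- by rewrite lag_energy0.
- by move=> j; apply: lag_energy_ge0.
Qed.
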